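(* Let $\Delta\subseteq{\sim}\mathrm{FO}$ and $\alpha\in\mathrm{FO}$. If $\Delta\models\alpha$ (in team semantics), then there is a first-order sentence $\varepsilon$ (a formula without free variables) such that $\Delta\models\varepsilon$ and $\varepsilon\models\alpha$.
   Context: Fix a countable vocabulary $\tau$ and a countably infinite set of variables. $\mathrm{FO}$: first-order $\tau$-formulas built with $\neg,\to,\forall x$; ${\sim}\mathrm{FO}=\{{\sim}\beta:\beta\in\mathrm{FO}\}$. A valuation is $(\mathcal A,T)$ with $\mathcal A$ a $\tau$-structure (nonempty domain) and $T$ a (possibly empty) set of assignments of domain elements to the variables. For $\beta\in\mathrm{FO}$, $(\mathcal A,T)\models\beta$ iff $(\mathcal A,s)\models\beta$ classically for every $s\in T$; $(\mathcal A,T)\models{\sim}\beta$ iff $(\mathcal A,T)\not\models\beta$. $\Gamma\models\psi$ iff every valuation satisfying all formulas in $\Gamma$ satisfies $\psi$. *)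

From Stdlib Require Import Fin.

Set Implicit Arguments.

(* A vocabulary tau: function symbols (constants = arity 0) and relation
   symbols, each with an arity.  Countability is imposed in the theorem. *)
Record signature := {
  Fsym : Type; far : Fsym -> nat;
  Rsym : Type; rar : Rsym -> nat }.

Definition countable_type (X : Type) : Prop :=
  exists f : X -> nat, forall x y, f x = f y -> x = y.

Section FOL.
Variable S : signature.

Definition var := nat.

Inductive term : Type :=
| tVar : var -> term
| tApp : forall f : Fsym S, (Fin.t (far S f) -> term) -> term.

Inductive form : Type :=
| fEq  : term -> term -> form
| fRel : forall r : Rsym S, (Fin.t (rar S r) -> term) -> form
| fNeg : form -> form
| fImp : form -> form -> form
| fAll : var -> form -> form.

Record structure := {
  dom : Type;
  dom_inh : dom;
  fint : forall f : Fsym S, (Fin.t (far S f) -> dom) -> dom;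
  rint : forall r : Rsym S, (Fin.t (rar S r) -> dom) -> Prop }.

Definition assignment (A : structure) := var -> dom A.

Definition update {A : structure} (s : assignment A) (x : var) (a : dom A)
  : assignment A := fun y => if PeanoNat.Nat.eqb y x then a else s y.

Fixpoint teval {A : structure} (s : assignment A) (t : term) : dom A :=
  match t with
  | tVar x => s x
  | tApp f args => fint A f (fun i => teval s (args i))
  end.

Fixpoint sat {A : structure} (s : assignment A) (phi : form) : Prop :=
  match phi with
  | fEq t1 t2 => teval s t1 = teval s t2
  | fRel r args => rint A r (fun i => teval s (args i))
  | fNeg p => ~ sat s p
  | fImp p q => sat s p -> sat s q
  | fAll x p => forall a : dom A, sat (update s x a) p
  end.

Fixpoint occurs (x : var) (t : term) : Prop :=
  match t with
  | tVar y => x = y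
  | tApp f args => exists i, occurs x (args i)
  end.

Fixpoint free (x : var) (phi : form) : Prop :=
  match phi with
  | fEq t1 t2 => occurs x t1 \/ occurs x t2
  | fRel r args => exists i, occurs x (args i)
  | fNeg p => free x p
  | fImp p q => free x p \/ free x q
  | fAll y p => x <> y /\ free x p
  end.

Definition sentence (phi : form) : Prop := forall x, ~ free x phi.

(* team formulas: FO formulas and weak (contradictory) negations ~beta *)
Inductive tform : Type :=
| tFO : form -> tform
| tTilde : form -> tform.

(* a team: possibly empty set of assignments *)
Definition team (A : structure) := assignment A -> Prop.

Definition tsat {A : structure} (T : team A) (psi : tform) : Prop :=
  match psi with
  | tFO b => forall s, T s -> sat s b
  | tTilde b => ~ (forall s, T s -> sat s b)
  end.

Definition entails (Gamma : tform -> Prop) (psi : tform) : Prop :=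
  forall (A : structure) (T : team A),
    (forall g, Gamma g -> tsat T g) -> tsat T psi.

Definition subset_tildeFO (Delta : tform -> Prop) : Prop :=
  forall g, Delta g -> exists b, g = tTilde b.

End FOL.

Arguments tFO {S}.
Arguments tTilde {S}.

From Stdlib Require Import Lia FunctionalExtensionality PeanoNat.

(* Weak negations are upward closed under team inclusion, so a structure
   satisfying Delta on some team satisfies it on the full team of all
   assignments; there alpha holds, i.e. alpha is valid in the structure.
   Hence the universal closure of alpha is a sentence entailed by Delta,
   and it entails alpha. *)

Lemma fin_monotone_bound (k : nat) (P : Fin.t k -> nat -> Prop) :
  (forall i m m', m <= m' -> P i m -> P i m') ->
  (forall i, exists n, P i n) -> exists n, forall i, P i n.
Proof.
  induction k as [|k IH]; intros Hmon H.
  - exists 0. intro i. apply Fin.case0. exact i.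
  - destruct (H Fin.F1) as [n0 Hn0].
    destruct (IH (fun i => P (Fin.FS i))) as [n1 Hn1];
      [intros; eauto | intro i; apply H |].
    exists (n0 + n1). intro i.
    apply (Fin.caseS' i).
    + apply Hmon with n0; [lia | exact Hn0].
    + intro j. apply Hmon with n1; [lia | apply Hn1].
Qed.

Section FreeVariables.
Context {S : signature}.

Lemma args_occurs_bound {k : nat} (args : Fin.t k -> term S) :
  (forall i, exists n, forall x, occurs x (args i) -> x < n) ->
  exists n, forall x, (exists i, occurs x (args i)) -> x < n.
Proof.
  intro H.
  destruct (@fin_monotone_bound k (fun i n => forall x, occurs x (args i) -> x < n))
    as [n Hn]; auto.
  - intros i m m' Hle Hm x Hx. specialize (Hm x Hx). lia.
  - exists n. intros x [i Hi]. exact (Hn i x Hi).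
Qed.

Lemma occurs_bound (t : term S) : exists n, forall x, occurs x t -> x < n.
Proof.
  induction t as [y | f args IH].
  - exists (Datatypes.S y). simpl. intros; lia.
  - exact (args_occurs_bound args IH).
Qed.

Lemma free_bound (phi : form S) : exists n, forall x, free x phi -> x < n.
Proof.
  induction phi as [t1 t2 | r args | p IH | p [n1 H1] q [n2 H2] | y p [n H]]; simpl.
  - destruct (occurs_bound t1) as [n1 H1], (occurs_bound t2) as [n2 H2].
    exists (n1 + n2). intros x [Hx | Hx]; [specialize (H1 x Hx) | specialize (H2 x Hx)]; lia.
  - apply args_occurs_bound. intro i. apply occurs_bound.
  - exact IH.
  - exists (n1 + n2). intros x [Hx | Hx]; [specialize (H1 x Hx) | specialize (H2 x Hx)]; lia.
  - exists n. intros x [_ Hx]. auto.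
Qed.

End FreeVariables.

Section UniversalClosure.
Context {S : signature}.

Fixpoint foralls (n : nat) (phi : form S) : form S :=
  match n with
  | 0 => phi
  | Datatypes.S m => fAll m (foralls m phi)
  end.

Lemma free_foralls n phi x : free x (foralls n phi) -> free x phi /\ n <= x.
Proof.
  induction n as [|n IH]; simpl; intro H.
  - split; [exact H | lia].
  - destruct H as [Hne H]. destruct (IH H). split; [assumption | lia].
Qed.

Lemma sentence_foralls {n phi} :
  (forall x, free x phi -> x < n) -> sentence (foralls n phi).
Proof.
  intros Hn x Hx. destruct (free_foralls n phi x Hx) as [Hfree Hle].
  specialize (Hn x Hfree). lia.
Qed.

Lemma update_same {A : structure S} (s : assignment A) x : update s x (s x) = s.
Proof.
  apply functional_extensionality. intro y. unfold update.
  destruct (Nat.eqb_spec y x); subst; reflexivity.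
Qed.

Lemma sat_foralls_valid {A : structure S} n phi :
  (forall s : assignment A, sat s phi) -> forall s : assignment A, sat s (foralls n phi).
Proof.
  intro H. induction n as [|n IH]; simpl; intro s.
  - apply H.
  - intro a. apply IH.
Qed.

Lemma sat_foralls_inst {A : structure S} n phi (s : assignment A) :
  sat s (foralls n phi) -> sat s phi.
Proof.
  revert s. induction n as [|n IH]; simpl; intros s H.
  - exact H.
  - apply IH. rewrite <- (update_same s n). apply H.
Qed.

End UniversalClosure.

Section TeamSemantics.
Context {S : signature}.

Definition full_team (A : structure S) : team A := fun _ => True.

Lemma tsat_tTilde_upward {A : structure S} (T T' : team A) b :
  (forall s, T s -> T' s) -> tsat T (tTilde b) -> tsat T' (tTilde b).
Proof.
  intros Hsub HT HT'. apply HT. intros s Hs. apply HT', Hsub, Hs.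
Qed.

Lemma tildeFO_full_team {Delta : tform S -> Prop} {A : structure S} {T : team A} :
  subset_tildeFO Delta -> (forall g, Delta g -> tsat T g) ->
  forall g, Delta g -> tsat (full_team A) g.
Proof.
  intros Hsub HT g Hg. destruct (Hsub g Hg) as [b ->].
  apply (tsat_tTilde_upward T); [intros; exact I | exact (HT _ Hg)].
Qed.

Lemma tildeFO_entails_valid {Delta : tform S -> Prop} {alpha : form S}
    {A : structure S} {T : team A} :
  subset_tildeFO Delta -> entails Delta (tFO alpha) ->
  (forall g, Delta g -> tsat T g) -> forall s : assignment A, sat s alpha.
Proof.
  intros Hsub Hent HT s.
  apply (Hent A (full_team A)); [exact (tildeFO_full_team Hsub HT) | exact I].
Qed.

End TeamSemantics.

Theorem mainTheorem14 (S : signature)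
    (HF : countable_type (Fsym S)) (HR : countable_type (Rsym S))
    (Delta : tform S -> Prop) (alpha : form S) :
  subset_tildeFO Delta ->
  entails Delta (tFO alpha) ->
  exists eps : form S,
    sentence eps /\
    entails Delta (tFO eps) /\
    entails (fun g => g = tFO eps) (tFO alpha).
Proof.
  intros Hsub Hent.
  destruct (free_bound alpha) as [n Hn].
  exists (foralls n alpha). split; [| split].
  - exact (sentence_foralls Hn).
  - intros A T HT s _.
    exact (sat_foralls_valid n alpha (tildeFO_entails_valid Hsub Hent HT) s).
  - intros A T HT s Hs.
    exact (sat_foralls_inst n alpha s (HT _ eq_refl s Hs)).
Qed.
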